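(* Let $q=2^t$. Then $\dim(\ker\pi_{P_1}\cap C(P,L))=q+1$.
   Context: Let $q$ be a prime power and $V$ a $4$-dimensional vector space over $\mathbb{F}_q$ with a nonsingular alternating bilinear form and symplectic basis $e_0,e_1,e_2,e_3$ with $(e_0,e_3)=(e_1,e_2)=1$. $P$ is the set of $1$-dimensional subspaces of $V$ (points), $L$ the set of totally isotropic $2$-dimensional subspaces (lines). $p_0=\langle e_0\rangle$; $P_1$ is the set of points $(a:b:c:d)$ with $d\ne 0$ (the points not collinear with $p_0$). $\mathbb{F}_2[P]$ is the space of functions $P\to\mathbb{F}_2$, and $C(P,L)$ is the span of the characteristic functions $\chi_\ell$ of all lines $\ell\in L$. $\pi_{P_1}:\mathbb{F}_2[P]\to\mathbb{F}_2[P_1]$ is restriction of functions to $P_1$. *)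

From HB Require Import structures.
From mathcomp Require Import all_boot all_order all_algebra all_field.
Set Implicit Arguments. Unset Strict Implicit. Unset Printing Implicit Defensive.
Import GRing.Theory.
Local Open Scope ring_scope.

Section Symplectic.
Variable F : finFieldType.

(* V = F^4 as row vectors, basis e0..e3 = coordinates 0..3. *)
Definition V := 'rV[F]_4.

(* The alternating form with (e0,e3) = (e1,e2) = 1. *)
Definition sform (u v : V) : F :=
  u 0 0 * v 0 3 - u 0 3 * v 0 0 + u 0 1 * v 0 2 - u 0 2 * v 0 1.

(* Subspaces of V are represented canonically by square matrices A
   with <<A>> = A (row space). *)
Definition canon (A : 'M[F]_4) : bool := genmx A == A.

Definition is_point (A : 'M[F]_4) : bool := canon A && (\rank A == 1)%N.

Definition totally_isotropic (A : 'M[F]_4) : bool :=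
  [forall u : V, forall v : V,
     ((u <= A)%MS && (v <= A)%MS) ==> (sform u v == 0)].

Definition is_line (A : 'M[F]_4) : bool :=
  [&& canon A, \rank A == 2%N & totally_isotropic A].

Local Notation Point := {A : 'M[F]_4 | is_point A}.
Local Notation Line := {A : 'M[F]_4 | is_line A}.

Definition inP1 (p : Point) : bool :=
  [exists v : V, (v <= val p)%MS && (v 0 3 != 0)].

Local Notation P1 := {p : Point | inP1 p}.

Definition F2P := {ffun Point -> ('F_2)^o}.
Definition F2P1 := {ffun P1 -> ('F_2)^o}.

Definition chi (l : Line) : F2P :=
  [ffun p : Point => ((val p <= val l)%MS)%:R].

Definition CPL : {vspace F2P} := <<[seq chi l | l : Line]>>%VS.

Definition pi_P1 : 'Hom(F2P, F2P1) :=
  linfun (fun f : F2P => [ffun p : P1 => f (val p)] : F2P1).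

End Symplectic.

Notation Point F := {A : 'M[F]_4 | is_point A}.
Notation Line F := {A : 'M[F]_4 | is_line A}.
Notation P1 F := {p : Point F | inP1 p}.

(* The q + 1 lines through p0 are L_o = <e_0, vo o>, o in F + oo.
   Their characteristic functions vanish on P_1 (L_o lies in p0^perp) and are
   linearly independent, since the point xo o = <vo o> lies on L_o only.
   Conversely let f vanish on P_1 and lie in C(P,L).  The key fact is a
   balance principle: a line meets two mutually orthogonal hyperbolic planes
   H, K in the same number (0 or 1) of points, so the linear functional
   f |-> sum_H f - sum_K f kills every chi_l, hence all of C(P,L).  Choosing
   pairs (H, K) that each meet p0^perp in a single point shows that f is
   constant on every L_o minus p0 and that f(p0) = sum_o f(xo o); hence
   f = sum_o f(xo o) chi_{L_o}.  The argument works for every finite field. *)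

From HB Require Import structures.
From mathcomp Require Import all_boot all_order all_algebra all_field ring zify.
Set Implicit Arguments. Unset Strict Implicit. Unset Printing Implicit Defensive.
Import GRing.Theory.
Local Open Scope ring_scope.

Lemma span_annihilated (K : fieldType) (vT : vectType K) (phi : vT -> K)
    (s : seq vT) :
  (forall a u v, phi (a *: u + v) = a * phi u + phi v) ->
  {in s, forall u, phi u = 0} -> {in <<s>>%VS, forall u, phi u = 0}.
Proof.
move=> phiL phi_s u /(@coord_span _ _ _ (in_tuple s)) ->.
have phiD x y : phi (x + y) = phi x + phi y by rewrite -{1}[x]scale1r phiL mul1r.
have phi0 : phi 0 = 0 by apply: (@addrI _ (phi 0)); rewrite -phiD !addr0.
apply: (big_ind (fun x => phi x = 0)) => // [x y phix phiy | i _].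
  by rewrite phiD phix phiy addr0.
by rewrite -[_ *: _]addr0 phiL phi0 phi_s ?mulr0 ?addr0 // mem_nth.
Qed.

Section SymplecticQuadrangle.
Variable F : finFieldType.
Local Notation V := (V F).
Local Notation Point := (Point F).
Local Notation Line := (Line F).

Lemma sformDl (u u' v : V) : sform (u + u') v = sform u v + sform u' v.
Proof. by rewrite /sform !mxE; ring. Qed.
Lemma sformDr (u v v' : V) : sform u (v + v') = sform u v + sform u v'.
Proof. by rewrite /sform !mxE; ring. Qed.
Lemma sformZl (c : F) (u v : V) : sform (c *: u) v = c * sform u v.
Proof. by rewrite /sform !mxE; ring. Qed.
Lemma sformZr (c : F) (u v : V) : sform u (c *: v) = c * sform u v.
Proof. by rewrite /sform !mxE; ring. Qed.
Lemma sform0l (v : V) : sform 0 v = 0.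
Proof. by rewrite /sform !mxE; ring. Qed.
Lemma sform_alt (u : V) : sform u u = 0.
Proof. by rewrite /sform; ring. Qed.
Lemma sformC (u v : V) : sform u v = - sform v u.
Proof. by rewrite /sform; ring. Qed.

Definition e (i : 'I_4) : V := delta_mx 0 i.
Lemma eE (i j : 'I_4) : e i 0 j = if i == j then 1 else 0.
Proof. by rewrite /e mxE eqxx andTb eq_sym; case: eqP. Qed.

Ltac sform_eval := rewrite /sform ?(eE, mxE) /=; ring.

Lemma sform_e0 (n : V) : sform (e 0) n = n 0 3. Proof. by sform_eval. Qed.
Lemma sform_e1 (n : V) : sform (e 1) n = n 0 2. Proof. by sform_eval. Qed.
Lemma sform_e2 (n : V) : sform (e 2) n = - n 0 1. Proof. by sform_eval. Qed.
Lemma sform_e3 (n : V) : sform (e 3) n = - n 0 0. Proof. by sform_eval. Qed.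

Lemma ord4P (j : 'I_4) : [\/ j = 0, j = 1, j = 2 | j = 3].
Proof.
by case: j => [[|[|[|[|//]]]] ?]; [apply: Or41|apply: Or42|apply: Or43|apply: Or44];
  apply: val_inj.
Qed.

Definition cv (n : V) : 'cV[F]_4 := \col_i sform (e i) n.

Lemma mul_cv (u n : V) : u *m cv n = (sform u n)%:M.
Proof.
have l3 : lift ord0 (lift ord0 (lift ord0 (ord0 : 'I_1))) = 3 :> 'I_4.
  exact: val_inj.
have l2 : lift ord0 (lift ord0 (ord0 : 'I_2)) = 2 :> 'I_4 by apply: val_inj.
have l1 : lift ord0 (ord0 : 'I_3) = 1 :> 'I_4 by apply: val_inj.
apply/matrixP => i j; rewrite !ord1 !mxE !big_ord_recl big_ord0 !mxE l3 l2 l1.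
by sform_eval.
Qed.

Lemma cv_eq0 (n : V) : (cv n == 0) = (n == 0).
Proof.
apply/eqP/eqP => [cv0 | ->]; last by apply/colP => i; rewrite !mxE sformC sform0l oppr0.
have ev i : sform (e i) n = 0 by move/colP/(_ i): cv0; rewrite !mxE.
apply/rowP => j; rewrite mxE; case: (ord4P j) => ->.
- by apply/eqP; rewrite -oppr_eq0 -sform_e3 ev.
- by apply/eqP; rewrite -oppr_eq0 -sform_e2 ev.
- by rewrite -sform_e1 ev.
- by rewrite -sform_e0 ev.
Qed.

Definition perp (n : V) : 'M[F]_4 := kermx (cv n).

Lemma sub_perp (u n : V) : (u <= perp n)%MS = (sform u n == 0).
Proof.
rewrite sub_kermx mul_cv; apply/eqP/eqP => [/matrixP/(_ 0 0)|->].
  by rewrite !mxE eqxx mulr1n.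
by apply/matrixP => i j; rewrite !mxE mul0rn.
Qed.

Lemma rank_perp (n : V) : n != 0 -> \rank (perp n) = 3.
Proof.
move=> nz; rewrite mxrank_ker; suff -> : \rank (cv n) = 1%N by [].
apply/eqP; rewrite eqn_leq rank_leq_col lt0n mxrank_eq0 cv_eq0.
exact: nz.
Qed.

Lemma sform_neq0_l (a c : V) : sform a c != 0 -> a != 0.
Proof. by apply: contraNneq => ->; rewrite sform0l. Qed.

Lemma separated_not_sub (a b c : V) :
  sform a c = 0 -> sform b c != 0 -> ~~ (b <= a)%MS.
Proof.
move=> ac bc; apply/negP => /sub_rVP[k bk].
by move: bc; rewrite bk sformZl ac mulr0 eqxx.
Qed.

Lemma sub_col_mx_l (a b : V) : (a <= col_mx a b)%MS.
Proof. by have := submx_refl (col_mx a b); rewrite col_mx_sub => /andP[]. Qed.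
Lemma sub_col_mx_r (a b : V) : (b <= col_mx a b)%MS.
Proof. by have := submx_refl (col_mx a b); rewrite col_mx_sub => /andP[]. Qed.

Lemma sub_col_mxP (n a b : V) :
  (n <= col_mx a b)%MS -> exists c d : F, n = c *: a + d *: b.
Proof.
case/submxP => D ->; rewrite -[D]hsubmxK mul_row_col.
exists (lsubmx D 0 0), (rsubmx D 0 0).
by rewrite {1}[lsubmx D]mx11_scalar {1}[rsubmx D]mx11_scalar !mul_scalar_mx.
Qed.

Lemma rank_col_mx2 (a b : V) :
  a != 0 -> ~~ (b <= a)%MS -> \rank (col_mx a b) = 2.
Proof.
move=> a0 nba; apply/eqP; rewrite eqn_leq rank_leq_row /=.
suff : (\rank a < \rank (col_mx a b))%N by rewrite rank_rV a0.
by apply: rank_ltmx; rewrite ltmxE sub_col_mx_l col_mx_sub (negbTE nba) andbF.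
Qed.

Lemma rank_hyperbolic (x z : V) : sform x z != 0 -> \rank (col_mx x z) = 2.
Proof.
move=> xz; apply: rank_col_mx2; first exact: sform_neq0_l xz.
by apply: (@separated_not_sub _ _ x); rewrite ?sform_alt // sformC oppr_eq0.
Qed.

Definition orthogonal m n (A : 'M[F]_(m, 4)) (B : 'M[F]_(n, 4)) : Prop :=
  forall u v : V, (u <= A)%MS -> (v <= B)%MS -> sform u v = 0.

Lemma orthogonal_sym m n (A : 'M[F]_(m, 4)) (B : 'M[F]_(n, 4)) :
  orthogonal A B -> orthogonal B A.
Proof. by move=> oAB u v su sv; rewrite sformC oAB // oppr0. Qed.

Lemma orthogonal_col_mx (x z y w : V) :
  sform x y = 0 -> sform x w = 0 -> sform z y = 0 -> sform z w = 0 ->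
  orthogonal (col_mx x z) (col_mx y w).
Proof.
move=> xy xw zy zw u v /sub_col_mxP[a [b ->]] /sub_col_mxP[c [d ->]].
by rewrite !(sformDl, sformDr, sformZl, sformZr) xy xw zy zw !(mulr0, addr0).
Qed.

Lemma sub_perp_orth m (A : 'M[F]_(m, 4)) (n : V) :
  (forall u : V, (u <= A)%MS -> sform u n = 0) -> (A <= perp n)%MS.
Proof. by move=> oAn; apply/row_subP => i; rewrite sub_perp oAn ?row_sub. Qed.

Lemma isotropicP (A : 'M[F]_4) : reflect (orthogonal A A) (totally_isotropic A).
Proof.
apply: (iffP idP) => [iso u v su sv | oA].
  by move: iso => /forallP/(_ u)/forallP/(_ v); rewrite su sv => /eqP.
apply/forallP => u; apply/forallP => v; apply/implyP => /andP[su sv].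
by rewrite oA.
Qed.

Lemma point_rank (p : Point) : \rank (val p) = 1.
Proof. by case: p => A /= /andP[_ /eqP]. Qed.

Lemma mkpt_subproof (v : V) : v != 0 -> is_point (genmx v).
Proof. by move=> nz; rewrite /is_point /canon genmx_id eqxx mxrank_gen rank_rV nz. Qed.

Definition mkpt (v : V) (nz : v != 0) : Point :=
  exist (fun A => is_point A) _ (mkpt_subproof nz).

Lemma sub_mkpt (v : V) (nz : v != 0) m (A : 'M[F]_(m, 4)) :
  (val (mkpt nz) <= A)%MS = (v <= A)%MS.
Proof. by rewrite /= genmxE. Qed.

Lemma mkpt_self (v : V) (nz : v != 0) : (v <= val (mkpt nz))%MS.
Proof. by rewrite /= genmxE. Qed.

Lemma mkptP (p : Point) (v : V) (nz : v != 0) : (v <= val p)%MS -> p = mkpt nz.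
Proof.
case: p => A isA /= sv; case/andP: (isA) => /eqP cA /eqP rA; apply: val_inj => /=.
rewrite -{1}cA; apply/genmxP/andP; split=> //.
by rewrite -(mxrank_leqif_sup sv).2 rank_rV nz rA.
Qed.

Lemma point_vector (p : Point) : exists2 v : V, v != 0 & (v <= val p)%MS.
Proof.
exists (nz_row (val p)); last exact: nz_row_sub.
by rewrite nz_row_eq0 -mxrank_eq0 point_rank.
Qed.

Lemma card_points_le1 m (A : 'M[F]_(m, 4)) :
  (\rank A <= 1)%N -> #|[set p : Point | (val p <= A)%MS]| = \rank A.
Proof.
case: (ltngtP (\rank A) 1) => // [rA0 _ | rA1 _].
  have A0 : A = 0 by apply/eqP; rewrite -mxrank_eq0 -leqn0 -ltnS.
  rewrite A0 mxrank0; apply/eqP; rewrite cards_eq0; apply/eqP/setP => p.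
  rewrite !inE; apply/negP => /submx0null p0.
  by move: (point_rank p); rewrite p0 mxrank0.
have v0 : nz_row A != 0 by rewrite nz_row_eq0 -mxrank_eq0 rA1.
suff -> : [set p : Point | (val p <= A)%MS] = [set mkpt v0] by rewrite cards1.
apply/setP => p; rewrite !inE; apply/idP/eqP => [pA | ->]; last first.
  by rewrite sub_mkpt nz_row_sub.
apply: mkptP; apply: submx_trans (nz_row_sub A) _.
by rewrite -(mxrank_leqif_sup pA).2 point_rank rA1.
Qed.

Lemma line_rank (l : Line) : \rank (val l) = 2.
Proof. by case: l => A /= /and3P[_ /eqP]. Qed.

Lemma line_isotropic (l : Line) : orthogonal (val l) (val l).
Proof. by case: l => A /= /and3P[_ _ /isotropicP]. Qed.

Lemma hyperbolic_not_in_line (l : Line) (x z : V) :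
  sform x z != 0 -> ~~ (col_mx x z <= val l)%MS.
Proof.
move=> xz; apply/negP; rewrite col_mx_sub => /andP[xl zl].
by move: xz; rewrite (line_isotropic xl zl) eqxx.
Qed.

Lemma meet_rank_le1 m k (A : 'M[F]_(m, 4)) (H : 'M[F]_(k, 4)) :
  \rank H = 2 -> ~~ (H <= A)%MS -> (\rank (A :&: H) <= 1)%N.
Proof.
move=> rH; apply: contraR; rewrite -ltnNge => r2.
have HAH : (H <= A :&: H)%MS.
  by rewrite -(mxrank_leqif_sup (capmxSr A H)).2 eqn_leq mxrankS ?capmxSr // rH.
by move: HAH; rewrite sub_capmx => /andP[].
Qed.

Lemma line_meet_hyperbolic (l : Line) (x z : V) :
  sform x z != 0 -> (\rank (val l :&: col_mx x z) <= 1)%N.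
Proof.
by move=> xz; apply: meet_rank_le1 (rank_hyperbolic xz) (hyperbolic_not_in_line l xz).
Qed.

(* If a line meets H, it also meets any plane K orthogonal to H: for n in
   the meet, the line and K both lie in the hyperplane n^perp, so l + K has
   rank at most 3 and l :&: K is nonzero. *)
Lemma line_meet_orthogonal (l : Line) m k (H : 'M[F]_(m, 4)) (K : 'M[F]_(k, 4)) :
  \rank K = 2 -> orthogonal H K ->
  (0 < \rank (val l :&: H))%N -> (0 < \rank (val l :&: K))%N.
Proof.
move=> rK oHK; rewrite lt0n mxrank_eq0 => lH0.
set n := nz_row (val l :&: H)%MS.
have n0 : n != 0 by rewrite nz_row_eq0.
have /andP[nl nH] : (n <= val l)%MS && (n <= H)%MS by rewrite -sub_capmx nz_row_sub.
have lK_perp : (val l + K <= perp n)%MS.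
  rewrite addsmx_sub; apply/andP; split; apply: sub_perp_orth => u uX.
    exact: line_isotropic l u n uX nl.
  exact: orthogonal_sym oHK u n uX nH.
have := mxrankS lK_perp; rewrite rank_perp //.
have := mxrank_sum_cap (val l) K; rewrite line_rank rK.
lia.
Qed.

Lemma line_meets_equally (l : Line) (x z y w : V) :
  sform x z != 0 -> sform y w != 0 -> orthogonal (col_mx x z) (col_mx y w) ->
  \rank (val l :&: col_mx x z) = \rank (val l :&: col_mx y w).
Proof.
move=> xz yw oHK.
have := line_meet_hyperbolic l xz; have := line_meet_hyperbolic l yw.
have := line_meet_orthogonal (l := l) (rank_hyperbolic yw) oHK.
have := line_meet_orthogonal (l := l) (rank_hyperbolic xz) (orthogonal_sym oHK).
lia.
Qed.

Definition planesum m (A : 'M[F]_(m, 4)) (f : F2P F) : ('F_2)^o :=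
  \sum_(p : Point | (val p <= A)%MS) f p.

Lemma F2P_scaleE (c : 'F_2) (f : F2P F) (p : Point) : (c *: f) p = c * f p.
Proof. by rewrite ffunE. Qed.

Lemma planesum_linear m (A : 'M[F]_(m, 4)) (a : 'F_2) (f g : F2P F) :
  planesum A (a *: f + g) = a * planesum A f + planesum A g.
Proof.
by rewrite /planesum mulr_sumr -big_split; apply: eq_bigr => p _; rewrite !ffunE.
Qed.

Lemma planesum_chi (l : Line) m (A : 'M[F]_(m, 4)) :
  (\rank (val l :&: A) <= 1)%N -> planesum A (chi l) = (\rank (val l :&: A))%:R.
Proof.
move=> le1; rewrite -card_points_le1 // -sum1_card natr_sum /planesum.
rewrite big_mkcond [RHS]big_mkcond /=; apply: eq_bigr => p _.
rewrite inE ffunE sub_capmx andbC.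
by case: (val p <= A)%MS; case: (val p <= val l)%MS.
Qed.

Lemma balance (x z y w : V) :
  sform x z != 0 -> sform y w != 0 -> orthogonal (col_mx x z) (col_mx y w) ->
  {in CPL F, forall f, planesum (col_mx x z) f = planesum (col_mx y w) f}.
Proof.
move=> xz yw oHK f fC; apply/eqP; rewrite -subr_eq0; apply/eqP; move: f fC.
apply: span_annihilated => [a f g | _ /mapP[l _ ->]].
  by rewrite !planesum_linear; ring.
rewrite !planesum_chi ?line_meet_hyperbolic //.
by rewrite (line_meets_equally l xz yw oHK) subrr.
Qed.

Definition perp0 : 'M[F]_4 := perp (e 0).

Lemma sub_perp0 (u : V) : (u <= perp0)%MS = (u 0 3 == 0).
Proof. by rewrite sub_perp sformC sform_e0 oppr_eq0. Qed.

Lemma inP1E (p : Point) : inP1 p = ~~ (val p <= perp0)%MS.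
Proof.
apply/existsP/idP => [[u /andP[up u3]] | /row_subPn[i pi]].
  by apply: contra u3 => p_perp; rewrite -sub_perp0 (submx_trans up p_perp).
by exists (row i (val p)); rewrite row_sub -sub_perp0.
Qed.

Definition restrict_P1 (f : F2P F) : F2P1 F := [ffun p : P1 F => f (val p)].

Fact restrict_P1_linear : linear restrict_P1.
Proof. by move=> a f g; apply/ffunP => p; rewrite !ffunE. Qed.

HB.instance Definition _ :=
  GRing.isLinear.Build _ _ _ _ restrict_P1 restrict_P1_linear.

Lemma kerP (f : F2P F) :
  reflect (forall p, inP1 p -> f p = 0) (f \in lker (pi_P1 F)).
Proof.
rewrite memv_ker (lfunE restrict_P1); apply: (iffP eqP) => [f0 p p1 | f0].
  by move/ffunP/(_ (exist _ p p1)): f0; rewrite !ffunE.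
by apply/ffunP => q; rewrite !ffunE f0 // (valP q).
Qed.

(* The pencil of lines through p0 = <e_0>: L_o = <e_0, vo o> for o in F + oo,
   where vo (Some s) = e_1 + s e_2 and vo None = e_2; wo o is a vector of
   e_0^perp :&: e_3^perp pairing nontrivially with vo o. *)
Definition vo (o : option F) : V := if o is Some s then e 1 + s *: e 2 else e 2.
Definition wo (o : option F) : V := if o is Some _ then - e 2 else e 1.

Ltac pencil_eval o := case: o => [?|] /=; sform_eval.

Lemma vo_e0 o : sform (vo o) (e 0) = 0. Proof. by pencil_eval o. Qed.
Lemma e0_wo o : sform (e 0) (wo o) = 0. Proof. by pencil_eval o. Qed.
Lemma vo_wo o : sform (vo o) (wo o) = -1. Proof. by pencil_eval o. Qed.

Lemma vo_vo o o' : o != o' -> sform (vo o) (vo o') != 0.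
Proof.
case: o o' => [s|] [s'|] //= ne.
- have -> : sform (vo (Some s)) (vo (Some s')) = s' - s by sform_eval.
  by rewrite subr_eq0 eq_sym.
- have -> : sform (vo (Some s)) (vo None) = 1 by sform_eval.
  exact: oner_neq0.
- have -> : sform (vo None) (vo (Some s')) = -1 by sform_eval.
  by rewrite oppr_eq0 oner_neq0.
Qed.

Lemma e0_neq0 : e 0 != 0.
Proof. by apply: (@sform_neq0_l _ (e 3)); rewrite sform_e0 eE oner_neq0. Qed.

Lemma vo_neq0 o : vo o != 0.
Proof. by apply: (@sform_neq0_l _ (wo o)); rewrite vo_wo oppr_eq0 oner_neq0. Qed.

Lemma pa_neq0 o (a : F) : a *: e 0 + vo o != 0.
Proof.
apply: (@sform_neq0_l _ (wo o)).
by rewrite sformDl sformZl e0_wo vo_wo mulr0 add0r oppr_eq0 oner_neq0.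
Qed.

Lemma pencil_line_subproof o : is_line (genmx (col_mx (e 0) (vo o))).
Proof.
have nsub : ~~ (vo o <= e 0)%MS.
  by apply: (separated_not_sub (e0_wo o)); rewrite vo_wo oppr_eq0 oner_neq0.
rewrite /is_line /canon genmx_id eqxx mxrank_gen (rank_col_mx2 e0_neq0 nsub) /=.
apply/isotropicP => x y; rewrite !genmxE; apply: orthogonal_col_mx;
  by rewrite ?sform_alt ?vo_e0 // sformC vo_e0 oppr0.
Qed.

Definition L o : Line := exist (fun A => is_line A) _ (pencil_line_subproof o).
Definition p0 : Point := mkpt e0_neq0.
Definition pa o a : Point := mkpt (pa_neq0 o a).
Definition xo o : Point := pa o 0.

Lemma pa_e3 o a : sform (a *: e 0 + vo o) (e 3) = a. Proof. by pencil_eval o. Qed.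
Lemma pa_e0 o a : sform (a *: e 0 + vo o) (e 0) = 0. Proof. by pencil_eval o. Qed.
Lemma vo_wo_e3 o a : sform (vo o) (a *: wo o + e 3) = - a. Proof. by pencil_eval o. Qed.
Lemma wo_e3_e0 o a : sform (a *: wo o + e 3) (e 0) = -1. Proof. by pencil_eval o. Qed.

Lemma pencil_orthogonal o a :
  orthogonal (col_mx (a *: e 0 + vo o) (e 3)) (col_mx (vo o) (a *: wo o + e 3)).
Proof. by apply: orthogonal_col_mx; pencil_eval o. Qed.

Lemma L_perp o : (val (L o) <= perp0)%MS.
Proof. by rewrite /= genmxE col_mx_sub /perp0 !sub_perp sform_alt vo_e0 eqxx. Qed.

Lemma chi_L_P1 o p : inP1 p -> chi (L o) p = 0.
Proof.
rewrite inP1E ffunE => p_nperp; case pL: (val p <= val (L o))%MS => //.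
by move: p_nperp; rewrite (submx_trans pL (L_perp o)).
Qed.

Lemma p0_on_L o : (val p0 <= val (L o))%MS.
Proof. by rewrite sub_mkpt /= genmxE sub_col_mx_l. Qed.

Lemma pa_on_L o a o' : (val (pa o a) <= val (L o'))%MS = (o == o').
Proof.
rewrite sub_mkpt /= genmxE; apply/idP/eqP => [|<-]; last first.
  by rewrite addmx_sub ?scalemx_sub ?sub_col_mx_l ?sub_col_mx_r.
move=> /sub_col_mxP[c [d def_pa]]; case: (eqVneq o o') => // ne.
have := congr1 (sform (vo o')) def_pa.
rewrite !(sformDr, sformZr) sform_alt !vo_e0 !(mulr0, add0r, addr0) => vo_perp.
by move: (vo_vo (o := o') (o' := o)); rewrite eq_sym ne vo_perp eqxx => /(_ isT).
Qed.

(* Every point of p0^perp is p0 or some pa o a: normalise a spanning vector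
   (u_0, u_1, u_2, 0) by its first nonzero coordinate among u_1, u_2, u_0. *)
Lemma perp0_points (p : Point) :
  (val p <= perp0)%MS -> p = p0 \/ exists o a, p = pa o a.
Proof.
move=> p_perp; have [u u0 up] := point_vector p.
have u3 : u 0 3 = 0 by apply/eqP; rewrite -sub_perp0 (submx_trans up p_perp).
have rescale (c : F) (x : V) (x0 : x != 0) : x = c *: u -> p = mkpt x0.
  by move=> def_x; apply: mkptP; rewrite def_x scalemx_sub.
have [u1 | u1] := eqVneq (u 0 1) 0; last first.
  right; exists (Some (u 0 2 / u 0 1)), (u 0 0 / u 0 1).
  apply: (rescale (u 0 1)^-1); apply/rowP => j; rewrite !(mxE, eE).
  by case: (ord4P j) => -> /=; rewrite ?u3; field.
have [u2 | u2] := eqVneq (u 0 2) 0; last first.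
  right; exists None, (u 0 0 / u 0 2).
  apply: (rescale (u 0 2)^-1); apply/rowP => j; rewrite !(mxE, eE).
  by case: (ord4P j) => -> /=; rewrite ?u1 ?u3; field.
have u00 : u 0 0 != 0.
  apply: contraNneq u0 => u00; apply/eqP/rowP => j; rewrite mxE.
  by case: (ord4P j) => ->.
left; apply: (rescale (u 0 0)^-1); apply/rowP => j; rewrite !(mxE, eE).
by case: (ord4P j) => -> /=; rewrite ?u1 ?u2 ?u3; field.
Qed.

(* A plane <x, z> with x in p0^perp and z outside meets p0^perp in the single
   point q = <x>; all its other points are in P_1, where f in the kernel
   vanishes. *)
Lemma planesum_single (f : F2P F) (q : Point) (x z : V) :
  f \in lker (pi_P1 F) -> x != 0 -> (x <= val q)%MS ->
  sform x (e 0) = 0 -> sform z (e 0) != 0 -> planesum (col_mx x z) f = f q.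
Proof.
move=> /kerP fk x0 xq x_perp z_nperp; rewrite (mkptP x0 xq).
have rH := rank_col_mx2 x0 (separated_not_sub x_perp z_nperp).
have le1 : (\rank (perp0 :&: col_mx x z) <= 1)%N.
  apply: meet_rank_le1 rH _.
  by rewrite col_mx_sub /perp0 !sub_perp (negbTE z_nperp) andbF.
have /card_le1_eqP meet_uniq :
    (#|[set p : Point | (val p <= perp0 :&: col_mx x z)%MS]| <= 1)%N.
  by rewrite card_points_le1.
rewrite /planesum (bigD1 (mkpt x0)) ?sub_mkpt ?sub_col_mx_l //=.
rewrite big1 ?addr0 // => p /andP[pH pq]; case p1 : (inP1 p); first exact: fk.
move: p1; rewrite inP1E => /negbFE p_perp.
case/eqP: pq; apply: meet_uniq; rewrite !inE sub_capmx ?p_perp ?pH //.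
by rewrite !sub_mkpt sub_col_mx_l /perp0 sub_perp x_perp eqxx.
Qed.

Lemma xo_inj : injective xo.
Proof.
by move=> o o' xo_eq; apply/eqP; rewrite -(pa_on_L o 0) -/(xo o) xo_eq pa_on_L.
Qed.

Lemma points_e12 :
  [set p : Point | (val p <= col_mx (e 1) (e 2))%MS] = xo @: setT.
Proof.
have e12_in u : (u <= col_mx (e 1) (e 2))%MS -> sform u (e 0) = 0 /\ sform u (e 3) = 0.
  by case/sub_col_mxP => c [d ->]; split; sform_eval.
apply/setP => p; rewrite inE; apply/idP/imsetP => [pK | [o _ ->]]; last first.
  rewrite sub_mkpt scale0r add0r; case: o => [s|] /=; last exact: sub_col_mx_r.
  by rewrite addmx_sub ?scalemx_sub ?sub_col_mx_l ?sub_col_mx_r.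
have [p_perp0 p_perp3] : (val p <= perp0)%MS /\ (val p <= perp (e 3))%MS.
  by split; apply: sub_perp_orth => u up; case: (e12_in u (submx_trans up pK)).
have [p_eq | [o [a p_eq]]] := perp0_points p_perp0; move: p_perp3; rewrite p_eq.
  by rewrite sub_mkpt sub_perp sform_e0 eE oner_eq0.
rewrite sub_mkpt sub_perp pa_e3 => /eqP a0; exists o => //.
by rewrite /xo -a0.
Qed.

Lemma planesum_e12 (f : F2P F) :
  planesum (col_mx (e 1) (e 2)) f = \sum_o f (xo o).
Proof.
rewrite /planesum (eq_bigl (fun p => p \in xo @: setT)) => [|p]; last first.
  by rewrite -points_e12 inE.
rewrite big_imset /=; last by move=> o o' _ _; apply: xo_inj.
by apply: eq_bigl => o; rewrite in_setT.
Qed.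

(* f is constant on each line L_o off p0: compare the orthogonal hyperbolic
   planes <a e_0 + vo o, e_3> and <vo o, a wo o + e_3>. *)
Lemma pencil_constant (f : F2P F) o a :
  f \in (lker (pi_P1 F) :&: CPL F)%VS -> f (pa o a) = f (xo o).
Proof.
case/memv_capP => fk fC; have [-> // | a0] := eqVneq a 0.
have e3_e0 : sform (e 3) (e 0) != 0 by rewrite sform_e3 eE oppr_eq0 oner_neq0.
have vo_xo : (vo o <= val (xo o))%MS by rewrite /= genmxE scale0r add0r.
rewrite -(planesum_single fk (pa_neq0 o a) (mkpt_self _) (pa_e0 o a) e3_e0).
rewrite -(planesum_single (z := a *: wo o + e 3) fk (vo_neq0 o) vo_xo (vo_e0 o));
  last first.
  by rewrite wo_e3_e0 oppr_eq0 oner_neq0.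
apply: (balance _ _ (@pencil_orthogonal o a) fC).
  by rewrite pa_e3.
by rewrite vo_wo_e3 oppr_eq0.
Qed.

(* The value at p0 is the sum over the points xo o, by comparing the
   orthogonal hyperbolic planes <e_0, e_3> and <e_1, e_2>. *)
Lemma p0_value (f : F2P F) :
  f \in (lker (pi_P1 F) :&: CPL F)%VS -> f p0 = \sum_o f (xo o).
Proof.
case/memv_capP => fk fC; rewrite -planesum_e12.
have e3_e0 : sform (e 3) (e 0) != 0 by rewrite sform_e3 eE oppr_eq0 oner_neq0.
rewrite -(planesum_single fk e0_neq0 (mkpt_self _) (sform_alt _) e3_e0).
have e0_e3 : sform (e 0) (e 3) != 0 by rewrite sform_e0 eE oner_neq0.
have e1_e2 : sform (e 1) (e 2) != 0 by rewrite sform_e1 eE oner_neq0.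
by apply: (balance e0_e3 e1_e2 _ fC); apply: orthogonal_col_mx; sform_eval.
Qed.

Lemma pencil_decomposition (f : F2P F) :
  f \in (lker (pi_P1 F) :&: CPL F)%VS -> f = \sum_o f (xo o) *: chi (L o).
Proof.
move=> fKC; have /memv_capP[/kerP fk _] := fKC.
apply/ffunP => p; rewrite sum_ffunE; under eq_bigr => o _ do rewrite F2P_scaleE.
case p1 : (inP1 p).
  by rewrite fk // big1 // => o _; rewrite chi_L_P1 ?mulr0.
move: p1; rewrite inP1E => /negbFE p_perp.
have [-> | [o [a ->]]] := perp0_points p_perp.
  by rewrite (p0_value fKC); apply: eq_bigr => o _; rewrite ffunE p0_on_L /= mulr1.
rewrite (pencil_constant o a fKC) (bigD1 o) //= big1 ?addr0 => [|o' o'o].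
  by rewrite ffunE pa_on_L eqxx mulr1.
by rewrite ffunE pa_on_L eq_sym (negbTE o'o) mulr0.
Qed.

Definition pencil : seq (F2P F) := [seq chi (L o) | o <- enum {: option F}].

Lemma pencil_in_kernel o : chi (L o) \in (lker (pi_P1 F) :&: CPL F)%VS.
Proof.
rewrite memv_cap; apply/andP; split; first by apply/kerP => p; apply: chi_L_P1.
by rewrite /CPL memv_span //; apply: map_f; rewrite mem_enum.
Qed.

Lemma span_pencil : <<pencil>>%VS = (lker (pi_P1 F) :&: CPL F)%VS.
Proof.
apply/eqP; rewrite eqEsubv; apply/andP; split.
  by apply/span_subvP => _ /mapP[o _ ->]; apply: pencil_in_kernel.
apply/subvP => f /pencil_decomposition ->; apply: memv_suml => o _.
by rewrite memvZ // memv_span //; apply: map_f; rewrite mem_enum.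
Qed.

(* The chi_{L_o} are independent: evaluating at xo o isolates one of them. *)
Lemma free_pencil : free pencil.
Proof.
apply/(@freeP _ _ _ (in_tuple pencil)) => k sum0 i.
set os := enum {: option F}.
have size_os : size pencil = size os by rewrite size_map.
have pencilE (j : 'I_(size pencil)) : (in_tuple pencil)`_j = chi (L (nth None os j)).
  by rewrite /= (nth_map None) // -size_os.
have := congr1 (fun g : F2P F => g (xo (nth None os i))) sum0.
rewrite sum_ffunE ffunE (bigD1 i) //= big1 ?addr0 => [|j ji].
  by rewrite F2P_scaleE pencilE ffunE pa_on_L eqxx mulr1.
rewrite F2P_scaleE pencilE ffunE pa_on_L nth_uniq ?enum_uniq -?size_os //.
by rewrite eq_sym (negbTE (ji : (j : nat) != i)) mulr0.
Qed.

End SymplecticQuadrangle.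

Theorem corollary12 (F : finFieldType) (t : nat) :
  (0 < t)%N -> #|F| = (2 ^ t)%N ->
  \dim (lker (pi_P1 F) :&: CPL F)%VS = (#|F| + 1)%N.
Proof.
move=> _ _.
by rewrite -span_pencil (eqP (free_pencil F)) size_map -cardE card_option addn1.
Qed.
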